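(* Let $n\ge 1$, $m=4+n$, and consider pure $SU(N)$ Yang–Mills theory on the flat manifold $\mathcal{M}^m=\mathcal{M}^4\times\mathcal{N}^n$, where $\mathcal{N}^n=S^1/Z_2\times\cdots\times S^1/Z_2$ ($n$ copies, with circles of radii $R_1,\dots,R_n$), with Lagrangian $\mathcal{L}_{YM}=-\tfrac14\mathcal{F}^a_{MN}\mathcal{F}_a^{MN}$, gauge fields $\mathcal{A}^a_M(x,y)$ and canonical momenta $\pi^M_a=\mathcal{F}^{M0}_a$. Its primary constraints are $\phi^{(1)}_a=\pi^0_a\approx 0$. Under the canonical transformation defined by the Fourier (Kaluza–Klein) expansions of the fields and momenta described in the context, the set of primary constraints $\pi^0_a(x,y)\approx 0$ of the $m$-dimensional theory is mapped faithfully (i.e. equivalently, in both directions) onto the set of primary constraints $$\phi^{(1)(0,\dots,0)}_a=\pi^{(0,\dots,0)0}_a\approx0,\qquad \phi^{(1)(\underline m_1,\dots,\underline m_n)}_a=\pi^{(\underline m_1,\dots,\underline m_n)0}_a\approx 0$$ for all $(\underline m_1,\dots,\underline m_n)\in\mathbb{Z}_{\ge0}^n\setminus\{(0,\dots,0)\}$ and all $a$, which are the primary constraints of the compactified four-dimensional theory.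
   Context: Coordinates are $(x,y)$ with $x\in\mathcal{M}^4$ (indices $\mu=0,1,2,3$) and $y=(y^1,\dots,y^n)$ the extra coordinates (indices $\bar\mu=5,\dots,4+n$). Fields are periodic, $\mathcal{A}^a_M(x,y+R)=\mathcal{A}^a_M(x,y)$ with $R=(R_1,\dots,R_n)$, and satisfy parity conditions $\mathcal{A}^a_\mu(x,-y)=\mathcal{A}^a_\mu(x,y)$, $\mathcal{A}^a_{\bar\mu}(x,-y)=-\mathcal{A}^a_{\bar\mu}(x,y)$. Writing $\theta_{\underline m}(y)=2\pi\sum_{i=1}^n \underline m_i y^i/R_i$ and $P=\prod_{i}R_i$, and letting $\sum'$ denote the sum over all $(\underline m_1,\dots,\underline m_n)\in\mathbb{Z}_{\ge0}^n$ except $(0,\dots,0)$, the expansions are $\mathcal{A}^a_\mu=P^{-1/2}A^{(0,\dots,0)a}_\mu(x)+(2/P)^{1/2}\sum' A^{(\underline m)a}_\mu(x)\cos\theta_{\underline m}(y)$, $\mathcal{A}^a_{\bar\mu}=(2/P)^{1/2}\sum' A^{(\underline m)a}_{\bar\mu}(x)\sin\theta_{\underline m}(y)$, and identically for momenta: $\pi^\mu_a=P^{-1/2}\pi^{(0,\dots,0)\mu}_a(x)+(2/P)^{1/2}\sum'\pi^{(\underline m)\mu}_a(x)\cos\theta_{\underline m}(y)$, $\pi^{\bar\mu}_a=(2/P)^{1/2}\sum'\pi^{(\underline m)\bar\mu}_a(x)\sin\theta_{\underline m}(y)$. The pairs $(A^{(\cdot)a}_M,\pi^{(\cdot)M}_a)$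 are the canonical pairs of the compactified theory obtained by integrating the Lagrangian over $y\in\prod_i[0,R_i]$. *)

From HB Require Import structures.
From mathcomp Require Import all_boot all_order all_algebra.
From mathcomp Require Import all_classical all_reals all_analysis.
Set Implicit Arguments. Unset Strict Implicit. Unset Printing Implicit Defensive.
Import Order.TTheory GRing.Theory Num.Theory.
Import numFieldNormedType.Exports.
Local Open Scope ring_scope.
Local Open Scope classical_set_scope.

Definition mindex (n : nat) := 'I_n -> nat.

Definition theta (R : realType) (n : nat) (Rr : 'I_n -> R) (m : mindex n)
  (y : 'I_n -> R) : R :=
  2 * pi * \sum_(i < n) ((m i)%:R * y i / Rr i).

Definition volP (R : realType) (n : nat) (Rr : 'I_n -> R) : R := \prod_(i < n) Rr i.

Definition is_zero_mode (n : nat) (m : mindex n) : Prop := forall i, m i = 0%N.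

Definition cos_mode (R : realType) (n : nat) (Rr : 'I_n -> R) (m : mindex n)
  (y : 'I_n -> R) : R :=
  if asbool (is_zero_mode m) then Num.sqrt ((volP Rr)^-1)
  else Num.sqrt (2 / volP Rr) * cos (theta Rr m y).

Definition cube_sum (R : realType) (n : nat) (K : nat) (f : mindex n -> R) : R :=
  \sum_(k : {ffun 'I_n -> 'I_K.+1}) f (fun i => nat_of_ord (k i)).

Definition abs_summable (R : realType) (n : nat) (c : mindex n -> R) : Prop :=
  exists B : R, forall K, cube_sum K (fun m => `|c m|) <= B.

(* the function f(y) is given by the KK cosine expansion with coefficients c,
   i.e. f(y) = P^{-1/2} c_0 + (2/P)^{1/2} sum' c_m cos theta_m(y) *)
Definition cos_expansion (R : realType) (n : nat) (Rr : 'I_n -> R)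
  (c : mindex n -> R) (f : ('I_n -> R) -> R) : Prop :=
  forall y, (fun K => cube_sum K (fun m => c m * cos_mode Rr m y)) @ \oo --> f y.

From HB Require Import structures.
From mathcomp Require Import all_boot all_order all_algebra.
From mathcomp Require Import all_classical all_reals all_analysis.
From mathcomp Require Import ring lra.
Set Implicit Arguments. Unset Strict Implicit. Unset Printing Implicit Defensive.
Import Order.TTheory GRing.Theory Num.Theory.
Import numFieldNormedType.Exports.
Local Open Scope ring_scope.
Local Open Scope classical_set_scope.

(* A function with an absolutely summable Kaluza-Klein cosine expansion
   determines its coefficients.  Sample it on the grid [y_i = R_i j_i / M],
   [0 <= j_i < M], with [M > 2 L]: on this grid the modes [cos theta_m] with
   all [m_i <= L] are orthogonal, so pairing the samples with [cos theta_k]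
   isolates [c_k], while the modes outside the cube of side [L] contribute at
   most the tail of [sum |c_m|], which vanishes as [L] grows.  Thus [pi^0 = 0]
   forces every mode [pi^(m)0] to vanish; the converse is immediate. *)

Section Trigonometry.
Variable R : realType.

Lemma periodicB (f : R -> R) (T x : R) (a b : nat) :
  periodic f T -> f (x + T *+ b - T *+ a) = f x.
Proof. by move=> fT; rewrite -[LHS](periodicn fT a) subrK periodicn. Qed.

Lemma cos_neq1 (h : R) : 0 < `|h| < pi *+ 2 -> cos h != 1.
Proof.
move=> /andP[h_gt0 h_lt2pi]; rewrite -cos_norm.
set u := `|h| / 2.
have -> : `|h| = u *+ 2 by rewrite /u mulr2n; field.
rewrite cos_mulr2n; apply/negP => /eqP cos2u.
have : `|cos u| == 1.
  by rewrite -(@eqrXn2 _ 2) ?normr_ge0 // real_normK ?num_real // expr1n; lra.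
rewrite norm_cos_eq1 => /eqP sin_u0.
have : 0 < sin u by apply: sin_gt0_pi; rewrite /u; apply/andP; split; lra.
by rewrite sin_u0 ltxx.
Qed.

Lemma rotation_invariant_eq0 (C S h : R) : cos h != 1 ->
  C = C * cos h - S * sin h -> S = S * cos h + C * sin h -> C = 0.
Proof.
move=> cos_h1 eC eS.
have : C * (1 - cos h) *+ 2 = 0.
  have circle : (1 - cos h) ^+ 2 + sin h ^+ 2 = (1 - cos h) *+ 2.
    by have := cos2Dsin2 h; rewrite mulr2n; nra.
  have -> : C * (1 - cos h) *+ 2 = (1 - cos h) * (C * (1 - cos h) + S * sin h)
      + sin h * (C * sin h - S * (1 - cos h)) by rewrite -mulrnAr -circle; ring.
  have -> : C * (1 - cos h) + S * sin h = 0 by lra.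
  have -> : C * sin h - S * (1 - cos h) = 0 by lra.
  by rewrite !mulr0 addr0.
move/eqP; rewrite mulrn_eq0 /= mulf_eq0 subr_eq0 => /orP[/eqP //|].
by rewrite eq_sym (negbTE cos_h1).
Qed.

End Trigonometry.

Section Grid.
Variable R : realType.
Variables (n M : nat).
Hypothesis M_gt0 : (0 < M)%N.

Definition grid_phase (d : 'I_n -> R) (j : {ffun 'I_n -> 'I_M}) : R :=
  2 * pi * \sum_(i < n) (d i * (j i)%:R / M%:R).

Definition grid_step (i0 : 'I_n) (j : {ffun 'I_n -> 'I_M}) : {ffun 'I_n -> 'I_M} :=
  [ffun i => if i == i0 then ordS (j i) else j i].

Lemma grid_step_inj i0 : injective (grid_step i0).
Proof.
move=> j1 j2 /ffunP e; apply/ffunP => i; have := e i; rewrite !ffunE.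
by case: eqP => // _; apply: ordS_inj.
Qed.

Lemma grid_phaseD (d1 d2 : 'I_n -> R) j :
  grid_phase d1 j + grid_phase d2 j = grid_phase (fun i => d1 i + d2 i) j.
Proof.
rewrite /grid_phase -mulrDr -big_split /=.
by congr (_ * _); apply: eq_bigr => i _; rewrite -!mulrDl.
Qed.

Lemma grid_phaseB (d1 d2 : 'I_n -> R) j :
  grid_phase d1 j - grid_phase d2 j = grid_phase (fun i => d1 i - d2 i) j.
Proof.
rewrite /grid_phase -mulrBr -sumrB /=.
by congr (_ * _); apply: eq_bigr => i _; rewrite -!mulrBl.
Qed.

Lemma grid_phase_update (d : 'I_n -> R) (i0 : 'I_n) (j j' : {ffun 'I_n -> 'I_M}) :
  (forall i, i != i0 -> j' i = j i) ->
  grid_phase d j' = grid_phase d j + 2 * pi * (d i0 * ((j' i0)%:R - (j i0)%:R) / M%:R).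
Proof.
move=> jj'; rewrite /grid_phase (bigD1 i0) //= [in RHS](bigD1 i0) //=.
by under eq_bigr => i /jj' -> do []; ring.
Qed.

(* One step in direction [i0] adds [h]; the wrap-around [M - 1 -> 0] adds
   [h - 2 pi d i0] instead, which is the same angle when [d i0] is an integer. *)
Lemma grid_phase_step (f : R -> R) (d : 'I_n -> R) (i0 : 'I_n) (a b : nat) j :
  periodic f (pi *+ 2) -> d i0 = a%:R - b%:R ->
  f (grid_phase d (grid_step i0 j)) = f (grid_phase d j + 2 * pi * d i0 / M%:R).
Proof.
move=> f_per di0; rewrite (@grid_phase_update d i0 j); last first.
  by move=> i /negbTE i_i0; rewrite ffunE i_i0.
rewrite /grid_step ffunE eqxx; have M_pos : (0 : R) < M%:R by rewrite ltr0n.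
rewrite (_ : nat_of_ord (ordS (j i0)) = (j i0).+1 %% M)%N //.
case: (ltnP (j i0).+1 M) => [jM | Mj].
  have -> : (((j i0).+1 %% M)%:R - (j i0)%:R : R) = 1.
    by rewrite modn_small // -natr1 addrAC subrr add0r.
  by rewrite mulr1 mulrA.
have eM : (j i0).+1 = M by apply/eqP; rewrite eqn_leq Mj ltn_ord.
rewrite eM modnn.
transitivity
  (f (grid_phase d j + 2 * pi * d i0 / M%:R + pi *+ 2 *+ b - pi *+ 2 *+ a)).
  congr f; rewrite -(mulr_natr _ b) -(mulr_natr _ a) -(mulr_natl pi 2) di0.
  rewrite (_ : M%:R = (j i0)%:R + 1 :> R); last by rewrite natr1 eM.
  by field; rewrite natr1 pnatr_eq0.
exact: (@periodicB R f (pi *+ 2) _ a b f_per).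
Qed.

(* Shifting the grid one step along [i0] rotates every phase by [h], a nonzero
   angle modulo [2 pi]; the sums of cosines and sines are then invariant under
   this rotation. *)
Lemma sum_cos_grid_phase_eq0 (d : 'I_n -> R) (i0 : 'I_n) (a b : nat) :
  (a < M)%N -> (b < M)%N -> a != b -> d i0 = a%:R - b%:R ->
  \sum_(j : {ffun 'I_n -> 'I_M}) cos (grid_phase d j) = 0.
Proof.
move=> aM bM ab di0; set h := 2 * pi * d i0 / M%:R.
have shift (f : R -> R) : periodic f (pi *+ 2) -> \sum_j f (grid_phase d j)
    = \sum_(j : {ffun 'I_n -> 'I_M}) f (grid_phase d j + h).
  move=> f_per; rewrite (reindex_inj (@grid_step_inj i0)) /=.
  by apply: eq_bigr => j _; rewrite (@grid_phase_step f d i0 a b j f_per di0).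
apply: (@rotation_invariant_eq0 _ _ (\sum_j sin (grid_phase d j)) h).
- apply: cos_neq1; have pi_pos := pi_gt0 R.
  have M_pos : (0 : R) < M%:R by rewrite ltr0n.
  have dM : 0 < `|d i0| / M%:R < 1.
    rewrite divr_gt0 ?ltr_pdivrMr // ?mul1r di0 ?normr_gt0 ?subr_eq0 ?eqr_nat //=.
    rewrite ltr_norml; move: aM bM; rewrite -!(ltr_nat R).
    have : (0 : R) <= a%:R by rewrite ler0n.
    have : (0 : R) <= b%:R by rewrite ler0n.
    lra.
  have -> : `|h| = 2 * pi * (`|d i0| / M%:R).
    rewrite /h !normrM normfV normr_nat.
    by rewrite (ger0_norm (ltW pi_pos)) (ger0_norm (ltW M_pos)) mulrA.
  rewrite -mulr_natl; nra.
- rewrite [LHS](shift _ (@cosD2pi R)); under eq_bigr do rewrite cosD.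
  by rewrite sumrB !mulr_suml.
- rewrite [LHS](shift _ (@sinD2pi R)); under eq_bigr do rewrite sinD.
  by rewrite big_split !mulr_suml.
Qed.

Lemma sum_cos_grid_phase (a b : mindex n) (d : 'I_n -> R) :
  (forall i, a i < M)%N -> (forall i, b i < M)%N ->
  (forall i, d i = (a i)%:R - (b i)%:R) ->
  \sum_(j : {ffun 'I_n -> 'I_M}) cos (grid_phase d j)
    = if asbool (a = b) then (M ^ n)%:R else 0.
Proof.
move=> aM bM dE; case: (pselect (a = b)) => [ab | ab].
  have phase0 j : grid_phase d j = 0.
    by rewrite /grid_phase big1 ?mulr0 // => i _; rewrite dE ab subrr !mul0r.
  under eq_bigr do rewrite phase0 cos0.
  by rewrite asboolT // sumr_const card_ffun !card_ord.
have [i0 abi0] : exists i0, a i0 <> b i0.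
  by apply/existsNP => ab'; apply/ab/funext.
by rewrite asboolF // (sum_cos_grid_phase_eq0 (aM i0) (bM i0) _ (dE i0)) //; apply/eqP.
Qed.

End Grid.

Section Modes.
Variable R : realType.
Variables (n : nat) (Rr : 'I_n -> R).

(* [mode_weight k * M ^ n] is the diagonal entry of the grid pairing below;
   the factor [1/2] is the grid mean of [cos ^ 2]. *)
Definition mode_weight (k : mindex n) : R :=
  if asbool (is_zero_mode k) then Num.sqrt (volP Rr)^-1
  else Num.sqrt (2 / volP Rr) / 2.

Definition mode_bound : R := Num.sqrt (volP Rr)^-1 + Num.sqrt (2 / volP Rr).

Lemma normr_cos_mode_le (m : mindex n) y : `|cos_mode Rr m y| <= mode_bound.
Proof.
have [w0 w1] := (sqrtr_ge0 (volP Rr)^-1, sqrtr_ge0 (2 / volP Rr)).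
rewrite /cos_mode /mode_bound; case: ifP => _; first by rewrite ger0_norm // lerDl.
by rewrite normrM ger0_norm // ler_wpDl // ler_piMr // cos_max.
Qed.

Hypothesis Rr_gt0 : forall i, 0 < Rr i.

Lemma volP_gt0 : 0 < volP Rr.
Proof. by apply: prodr_gt0 => i _; exact: Rr_gt0. Qed.

Lemma mode_weight_gt0 (k : mindex n) : 0 < mode_weight k.
Proof.
rewrite /mode_weight; case: ifP => _.
  by rewrite sqrtr_gt0 invr_gt0 volP_gt0.
by rewrite divr_gt0 // sqrtr_gt0 divr_gt0 ?volP_gt0.
Qed.

End Modes.

Section GridSampling.
Variable R : realType.
Variables (n : nat) (Rr : 'I_n -> R) (M : nat).

Definition grid_point (j : {ffun 'I_n -> 'I_M}) : 'I_n -> R :=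
  fun i => Rr i * (j i)%:R / M%:R.

Definition grid_pairing (k m : mindex n) : R :=
  \sum_(j : {ffun 'I_n -> 'I_M})
    cos_mode Rr m (grid_point j) * cos (theta Rr k (grid_point j)).

Lemma normr_grid_pairing_le (k m : mindex n) :
  `|grid_pairing k m| <= mode_bound Rr * (M ^ n)%:R.
Proof.
rewrite /grid_pairing (le_trans (ler_norm_sum _ _ _)) //.
have -> : (M ^ n)%:R = \sum_(j : {ffun 'I_n -> 'I_M}) (1 : R).
  by rewrite sumr_const card_ffun !card_ord.
rewrite mulr_sumr; apply: ler_sum => j _; rewrite normrM.
by apply: ler_pM; rewrite ?normr_ge0 ?normr_cos_mode_le ?cos_max.
Qed.

Hypothesis Rr_gt0 : forall i, 0 < Rr i.

Lemma theta_grid_point (m : mindex n) j : (0 < M)%N ->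
  theta Rr m (grid_point j) = grid_phase (fun i => (m i)%:R) j.
Proof.
move=> M_gt0; rewrite /theta /grid_phase /grid_point.
congr (_ * _); apply: eq_bigr => i _.
have Ri := Rr_gt0 i; have : (0 : R) < M%:R by rewrite ltr0n.
by move=> M_pos; field; rewrite !gt_eqF.
Qed.

(* [M > 2 L] keeps the sums [m_i + k_i] from wrapping around the grid. *)
Lemma grid_pairing_eq (L : nat) (k m : mindex n) : (2 * L < M)%N ->
  (forall i, k i <= L)%N -> (forall i, m i <= L)%N ->
  grid_pairing k m = if asbool (m = k) then mode_weight Rr k * (M ^ n)%:R else 0.
Proof.
move=> LM kL mL.
have kM i : (k i < M)%N.
  by apply: leq_ltn_trans LM; rewrite (leq_trans (kL i)) // leq_pmull.
have mM i : (m i < M)%N.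
  by apply: leq_ltn_trans LM; rewrite (leq_trans (mL i)) // leq_pmull.
have M_gt0 : (0 < M)%N by apply: leq_ltn_trans LM.
have sum_cos := @sum_cos_grid_phase R n M M_gt0.
rewrite /grid_pairing /cos_mode /mode_weight.
under eq_bigr do rewrite !theta_grid_point //.
case: (pselect (is_zero_mode m)) => [zm | nzm].
  have m0 : m = (fun _ => 0%N) by apply: funext.
  rewrite asboolT // -mulr_sumr (sum_cos k (fun _ => 0%N)) //; last first.
    by move=> i; rewrite subr0.
  case: (pselect (k = fun _ => 0%N)) => [k0 | nk0].
    by rewrite !asboolT // ?m0 ?k0.
  by rewrite !asboolF ?mulr0 // m0 => /esym.
rewrite asboolF //.
have cos_prod (j : {ffun 'I_n -> 'I_M}) :
    Num.sqrt (2 / volP Rr) * cos (grid_phase (fun i => (m i)%:R) j)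
      * cos (grid_phase (fun i => (k i)%:R) j)
    = Num.sqrt (2 / volP Rr) / 2 * (cos (grid_phase (fun i => (m i)%:R - (k i)%:R) j)
      + cos (grid_phase (fun i => (m i)%:R + (k i)%:R) j)).
  by rewrite -grid_phaseB -grid_phaseD cosB cosD; field.
have sum_sum : \sum_(j : {ffun 'I_n -> 'I_M})
    cos (grid_phase (fun i => (m i)%:R + (k i)%:R) j) = 0 :> R.
  rewrite (sum_cos (fun i => m i + k i)%N (fun _ => 0%N)).
  - rewrite asboolF // => mk0; apply: nzm => i.
    by have /eqP := congr1 (fun p => p i) mk0; rewrite addn_eq0 => /andP[/eqP].
  - by move=> i; rewrite (leq_ltn_trans _ LM) // mul2n -addnn leq_add.
  - by [].
  - by move=> i; rewrite subr0 natrD.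
under eq_bigr do rewrite cos_prod.
rewrite -mulr_sumr big_split /= sum_sum addr0 (sum_cos m k) //.
case: (pselect (m = k)) => [mk | nmk]; last by rewrite asboolF ?mulr0.
have nzk : ~ is_zero_mode k by rewrite -mk.
by rewrite (asboolT mk) (asboolF nzk).
Qed.

End GridSampling.

Section CubeSums.
Variable R : realType.
Variable n : nat.

Definition in_cube (L : nat) {K : nat} (x : {ffun 'I_n -> 'I_K.+1}) : bool :=
  [forall i, (x i <= L)%N].

Lemma cube_sum_in_cube (L K : nat) (h : mindex n -> R) : (L <= K)%N ->
  \sum_(x : {ffun 'I_n -> 'I_K.+1} | in_cube L x) h (fun i => nat_of_ord (x i))
  = cube_sum L h.
Proof.
move=> LK; have LK1 : (L.+1 <= K.+1)%N by [].
pose widen (x : {ffun 'I_n -> 'I_L.+1}) : {ffun 'I_n -> 'I_K.+1} :=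
  [ffun i => widen_ord LK1 (x i)].
pose narrow (x : {ffun 'I_n -> 'I_K.+1}) : {ffun 'I_n -> 'I_L.+1} :=
  [ffun i => inord (x i)].
rewrite /cube_sum (reindex_onto widen narrow) => [|x /forallP xL]; last first.
  by apply/ffunP => i; rewrite !ffunE; apply: val_inj; rewrite /= inordK // ltnS xL.
apply: eq_big => [x | x _]; last by congr h; apply: funext => i; rewrite ffunE.
apply/andP; split; first by apply/forallP => i; rewrite ffunE /= -ltnS.
by apply/eqP/ffunP => i; rewrite !ffunE; apply: val_inj; rewrite /= inordK.
Qed.

Lemma cube_sumB (L K : nat) (h : mindex n -> R) : (L <= K)%N ->
  cube_sum K h - cube_sum L h
  = \sum_(x : {ffun 'I_n -> 'I_K.+1} | ~~ in_cube L x) h (fun i => nat_of_ord (x i)).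
Proof.
move=> LK; rewrite -(cube_sum_in_cube h LK) /cube_sum (bigID (in_cube L)) /=.
by rewrite addrC addrK.
Qed.

Lemma ler_cube_sum (L K : nat) (h : mindex n -> R) : (forall m, 0 <= h m) ->
  (L <= K)%N -> cube_sum L h <= cube_sum K h.
Proof. by move=> h_ge0 LK; rewrite -subr_ge0 cube_sumB // sumr_ge0. Qed.

Lemma ler_norm_cube_sumB (L K : nat) (h g : mindex n -> R) :
  (forall m, `|h m| <= g m) -> (L <= K)%N ->
  `|cube_sum K h - cube_sum L h| <= cube_sum K g - cube_sum L g.
Proof.
move=> hg LK; rewrite !cube_sumB //.
by apply: le_trans (ler_norm_sum _ _ _) _; apply: ler_sum => x _.
Qed.

Lemma cube_sum_delta (L : nat) (h : mindex n -> R) (k : mindex n) :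
  (forall i, k i <= L)%N ->
  (forall m, (forall i, m i <= L)%N -> m <> k -> h m = 0) -> cube_sum L h = h k.
Proof.
move=> kL h0; pose kx : {ffun 'I_n -> 'I_L.+1} := [ffun i => inord (k i)].
have kxE : (fun i => nat_of_ord (kx i)) = k.
  by apply: funext => i; rewrite ffunE inordK // ltnS.
rewrite /cube_sum (bigD1 kx) //= big1 ?addr0 ?kxE // => x x_kx.
apply: h0 => [i | xk]; first by rewrite -ltnS.
move/eqP: x_kx; apply; apply/ffunP => i; apply: val_inj.
by rewrite ffunE /= -(congr1 (fun p => p i) xk) inordK.
Qed.

End CubeSums.

Section Coefficients.
Variable R : realType.
Variables (n : nat) (Rr : 'I_n -> R).
Hypothesis Rr_gt0 : forall i, 0 < Rr i.
Variables (c : mindex n -> R) (f : ('I_n -> R) -> R).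
Hypothesis c_summable : abs_summable c.
Hypothesis f_expansion : cos_expansion Rr c f.

Let s K := cube_sum K (fun m => `|c m|).

Let s_ub : has_ubound (range s).
Proof. by have [B sB] := c_summable; exists B => _ [K _ <-]; exact: sB. Qed.

Let s_le_sup K : s K <= sup (range s).
Proof. by apply: sup_upper_bound; [split; [exists (s 0%N), 0%N | ] | exists K]. Qed.

Let s_cvg : s @ \oo --> sup (range s).
Proof.
apply: nondecreasing_cvgn s_ub => L K LK.
by apply: ler_cube_sum => // m; exact: normr_ge0.
Qed.

Lemma grid_sample_cvg (M : nat) (k : mindex n) :
  cube_sum K (fun m => c m * grid_pairing Rr M k m) @[K --> \oo] -->
  \sum_(j : {ffun 'I_n -> 'I_M}) cos (theta Rr k (grid_point Rr j)) * f (grid_point Rr j).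
Proof.
have -> : (fun K => cube_sum K (fun m => c m * grid_pairing Rr M k m)) =
    fun K => \sum_(j : {ffun 'I_n -> 'I_M}) cos (theta Rr k (grid_point Rr j))
      * cube_sum K (fun m => c m * cos_mode Rr m (grid_point Rr j)).
  apply: funext => K; rewrite /cube_sum /grid_pairing.
  under eq_bigr do rewrite mulr_sumr.
  rewrite exchange_big /=; apply: eq_bigr => j _.
  by rewrite mulr_sumr; apply: eq_bigr => x _; ring.
apply: cvg_big => [|j _]; first exact: add_continuous.
by apply: cvgM; [exact: cvg_cst | exact: f_expansion].
Qed.

Lemma grid_sample_approx (L M : nat) (k : mindex n) : (2 * L < M)%N ->
  (forall i, k i <= L)%N ->
  `|\sum_(j : {ffun 'I_n -> 'I_M})
       cos (theta Rr k (grid_point Rr j)) * f (grid_point Rr j)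
     - c k * (mode_weight Rr k * (M ^ n)%:R)|
  <= (sup (range s) - s L) * (mode_bound Rr * (M ^ n)%:R).
Proof.
move=> LM kL; set W := mode_bound Rr * _; set target := c k * _.
have head : cube_sum L (fun m => c m * grid_pairing Rr M k m) = target.
  rewrite (cube_sum_delta kL) => [|m mL mk].
    by rewrite (grid_pairing_eq Rr_gt0 LM kL kL) asboolT.
  by rewrite (grid_pairing_eq Rr_gt0 LM kL mL) asboolF ?mulr0.
have W_ge0 : 0 <= W by rewrite mulr_ge0 ?ler0n ?addr_ge0 ?sqrtr_ge0.
apply: (cvgr_to_le (F := \oo)).
  by apply: cvg_norm; apply: cvgB; [exact: grid_sample_cvg | exact: cvg_cst].
exists L => // K /= LK; rewrite -head.
rewrite (le_trans (ler_norm_cube_sumB (g := fun m => `|c m| * W) _ LK)) //.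
  by move=> m; rewrite normrM ler_wpM2l ?normr_grid_pairing_le.
rewrite /cube_sum /= -!mulr_suml -mulrBl; apply: ler_wpM2r => //.
by apply: lerB => //; exact: s_le_sup.
Qed.

Lemma cos_expansion_coef_eq0 : (forall y, f y = 0) -> forall k, c k = 0.
Proof.
move=> f0 k.
have tail L : (forall i, k i <= L)%N ->
    `|c k| * mode_weight Rr k <= (sup (range s) - s L) * mode_bound Rr.
  move=> kL; have := grid_sample_approx (ltnSn (2 * L)) kL.
  rewrite big1 => [|j _]; last by rewrite f0 mulr0.
  rewrite sub0r normrN normrM (ger0_norm (ltW (mulr_gt0 (mode_weight_gt0 Rr_gt0 k) _))).
    by rewrite mulrA !mulrA ler_pM2r ?ltr0n ?expn_gt0.
  by rewrite ltr0n expn_gt0.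
have : `|c k| * mode_weight Rr k <= 0.
  have tail_cvg0 : (sup (range s) - s L) * mode_bound Rr @[L --> \oo] --> 0.
    rewrite -(mul0r (mode_bound Rr)) -(subrr (sup (range s))).
    by apply: cvgMl; apply: cvgB => //; exact: cvg_cst.
  apply: (cvgr_to_ge tail_cvg0).
  exists (\max_(i < n) k i)%N => // L /= kL; apply: tail => i.
  exact: leq_trans (leq_bigmax_cond _ _) kL.
rewrite pmulr_lle0 ?mode_weight_gt0 // normr_le0 => /eqP //.
Qed.

End Coefficients.

Lemma cos_expansion_eq0 (R : realType) (n : nat) (Rr : 'I_n -> R)
    (c : mindex n -> R) (f : ('I_n -> R) -> R) :
  cos_expansion Rr c f -> (forall m, c m = 0) -> forall y, f y = 0.
Proof.
move=> f_expansion c0 y; have := f_expansion y.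
have -> : (fun K => cube_sum K (fun m => c m * cos_mode Rr m y)) = fun=> 0.
  by apply: funext => K; rewrite /cube_sum big1 // => x _; rewrite c0 mul0r.
by move=> f_lim; apply: esym; exact: (cvg_unique _ (cvg_cst (0 : R)) f_lim).
Qed.

Theorem proposition1 (R : realType) (n : nat) (hn : (1 <= n)%N)
  (N : nat) (hN : (2 <= N)%N) (Rr : 'I_n -> R) (hR : forall i, 0 < Rr i)
  (pi0 : 'I_(N ^ 2 - 1) -> ('I_4 -> R) -> ('I_n -> R) -> R)
  (pi0KK : 'I_(N ^ 2 - 1) -> ('I_4 -> R) -> mindex n -> R)
  (hsum : forall a x, abs_summable (pi0KK a x))
  (hexp : forall a x, cos_expansion Rr (pi0KK a x) (pi0 a x)) :
  (forall a x y, pi0 a x y = 0) <->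
  ((forall a x, pi0KK a x (fun _ => 0%N) = 0) /\
   (forall a x (m : mindex n), ~ is_zero_mode m -> pi0KK a x m = 0)).
Proof.
split=> [pi0_eq0 | [zero_mode_eq0 mode_eq0] a x].
  have coef_eq0 a x := cos_expansion_coef_eq0 hR (hsum a x) (hexp a x) (pi0_eq0 a x).
  by split=> [a x | a x m _]; exact: coef_eq0.
apply: (cos_expansion_eq0 (hexp a x)) => m.
case: (pselect (is_zero_mode m)) => [m0 | /mode_eq0 //].
by rewrite (_ : m = fun=> 0%N) ?zero_mode_eq0 //; apply: funext.
Qed.
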